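(* Let $P_1,\dots,P_N\in\mathbb{R}^2$ be fixed regular points and let $T_0$ be a full Steiner topology on them. Let $S$ and $S'$ be two adjacent Steiner points of $T_0$, where the neighbors of $S$ are $\{A,B,S'\}$ and the neighbors of $S'$ are $\{C,D,S\}$ (each of $A,B,C,D$ may be a regular or a Steiner point). Let $T_1$ and $T_2$ be the two other topologies obtained from $T_0$ by reorganizing the neighborhood of $S,S'$: in $T_1$ the neighbors of $S$ are $\{B,C,S'\}$ and those of $S'$ are $\{A,D,S\}$; in $T_2$ the neighbors of $S$ are $\{A,C,S'\}$ and those of $S'$ are $\{B,D,S\}$; all other adjacencies are unchanged. Consider a minimal tree for $T_0$, i.e. a placement of the Steiner points minimizing the total Euclidean edge length among all placements realizing $T_0$ (coincident points allowed), and suppose that in this minimal tree the segments $[AB]$ and $[CD]$ intersect. Then: (1) $S$ and $S'$ have the same coordinates; (2) the length $L_{T_0}$ of the minimal tree for $T_0$ satisfies $L_{T_0}\ge L_{T_i}$ for $i=1,2$, where $L_{T_i}$ is the minimal length of a tree with topology $T_i$; (3) in this minimal tree, $|AS|+|BS|+|CS'|+|DS'|+|SS'| = |AB|+|CD|$.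
   Context: A Steiner tree on $N$ given (regular) points is a tree in the plane whose vertex set consists of the regular points together with additional vertices called Steiner points, each Steiner point having degree exactly 3; its length is the sum of the Euclidean lengths of its edges. The topology of a Steiner tree is its combinatorial structure (which vertices are adjacent). A full topology is one with the maximal number $N-2$ of Steiner points. For a fixed topology, the regular points are fixed and the Steiner point positions are variables in $\mathbb{R}^2$; positions may coincide with each other or with regular points (degenerate trees, with zero-length edges). *)

From Stdlib Require Import Reals.
From mathcomp Require Import all_boot.

Set Implicit Arguments.
Unset Strict Implicit.
Unset Printing Implicit Defensive.

Local Open Scope R_scope.

Definition pt : Type := (R * R)%type.

Definition edist (p q : pt) : R :=
  sqrt (Rplus (Rsqr (Rminus (fst p) (fst q))) (Rsqr (Rminus (snd p) (snd q)))).

(* Vertices of a Steiner tree on N regular points with N-2 Steiner points: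
   inl i = regular point P_i, inr k = Steiner point S_k. *)
Definition vtx (N : nat) : finType := ('I_N + 'I_(N - 2)%nat)%type.

Definition topology (N : nat) := rel (vtx N).

(* A full Steiner topology: a tree (symmetric, loopless, connected, with
   #V - 1 edges, each edge being counted twice as ordered pairs) on the N
   regular points and the N-2 Steiner points, every Steiner point of degree 3. *)
Definition full_topology (N : nat) (T : topology N) : Prop :=
  [/\ symmetric T,
      irreflexive T,
      (forall x y : vtx N, connect T x y),
      (#|[set p : vtx N * vtx N | T p.1 p.2]| = (#|vtx N| - 1) * 2)%nat
    & (forall k : 'I_(N - 2)%nat, #|[set y : vtx N | T (inr k) y]| = 3%nat)].

Definition vpos (N : nat) (P : 'I_N -> pt) (X : 'I_(N - 2)%nat -> pt) (v : vtx N) : pt :=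
  match v with inl i => P i | inr k => X k end.

Fixpoint Rsum (l : seq R) : R :=
  match l with [::] => R0 | x :: l' => Rplus x (Rsum l') end.

(* Total Euclidean length of the tree with topology T and placement X:
   sum over ordered adjacent pairs, divided by 2 (each edge appears twice). *)
Definition tree_length (N : nat) (T : topology N) (P : 'I_N -> pt)
    (X : 'I_(N - 2)%nat -> pt) : R :=
  Rdiv (Rsum [seq edist (vpos P X p.1) (vpos P X p.2)
          | p <- enum [set p : (vtx N * vtx N)%type | T p.1 p.2]]) 2.

Definition minimal_tree (N : nat) (T : topology N) (P : 'I_N -> pt)
    (X : 'I_(N - 2)%nat -> pt) : Prop :=
  forall Y : 'I_(N - 2)%nat -> pt, Rle (tree_length T P X) (tree_length T P Y).

Definition upair_eq (N : nat) (u v a b : vtx N) : bool :=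
  ((u == a) && (v == b)) || ((u == b) && (v == a)).

(* Reorganisation of the neighbourhood of the adjacent Steiner points S, S':
   the neighbour X of S is moved to S' and the neighbour Y of S' is moved
   to S; all other adjacencies are unchanged. *)
Definition swap_topology (N : nat) (T : topology N) (S S' X Y : vtx N) : topology N :=
  fun u v =>
    if upair_eq u v S X || upair_eq u v S' Y then false
    else if upair_eq u v S Y || upair_eq u v S' X then true
    else T u v.

Definition segments_intersect (p q r s : pt) : Prop :=
  exists t u : R, Rle 0 t /\ Rle t 1 /\ Rle 0 u /\ Rle u 1 /\
    Rplus (fst p) (Rmult t (Rminus (fst q) (fst p)))
      = Rplus (fst r) (Rmult u (Rminus (fst s) (fst r))) /\
    Rplus (snd p) (Rmult t (Rminus (snd q) (snd p)))
      = Rplus (snd r) (Rmult u (Rminus (snd s) (snd r))).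

(** Put both Steiner points at a common point [I] of [[AB]] and [[CD]]: the
    edges at [S] and [S'] then have total length at most [|IA| + |IB| + |IC|
    + |ID| = |AB| + |CD|], for [T0] as well as for either swapped topology,
    since a swap only redistributes [A, B, C, D] between [S] and [S'], while
    the rest of the tree is unchanged.  By
    the triangle inequality the local part of any placement for [T0] has
    length at least [|AB| + |CD| + |SS'|], so minimality forces [|SS'| = 0]
    and equality in (3), and the common placement witnesses (2). *)

From HB Require Import structures.
From Stdlib Require Import Reals Rgeom Lra.
From mathcomp Require Import all_boot.

Set Implicit Arguments.
Unset Strict Implicit.
Unset Printing Implicit Defensive.

Local Open Scope R_scope.

Lemma edist_ge0 p q : 0 <= edist p q.
Proof. exact: sqrt_pos. Qed.

Lemma edist_sym p q : edist p q = edist q p.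
Proof. exact: distance_symm. Qed.

Lemma edist_triangle p q r : edist p q <= edist p r + edist r q.
Proof. exact: triangle. Qed.

Lemma edist_refl p : edist p p = 0.
Proof. exact: distance_refl. Qed.

Lemma edist_eq0 p q : edist p q = 0 -> p = q.
Proof.
move/sqrt_eq_0 => /(_ (Rplus_le_le_0_compat _ _ (Rle_0_sqr _) (Rle_0_sqr _))).
by case/Rplus_sqr_eq_0; case: p q => [x y] [x' y'] /= h1 h2; congr pair; lra.
Qed.

Definition seg_point (p q : pt) (t : R) : pt :=
  (p.1 + t * (q.1 - p.1), p.2 + t * (q.2 - p.2)).

Lemma edist_seg_point p q t : 0 <= t <= 1 ->
  edist (seg_point p q t) p + edist (seg_point p q t) q = edist p q.
Proof.
move=> [t0 t1]; rewrite /edist /seg_point /=.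
have -> : (p.1 + t * (q.1 - p.1) - p.1)² + (p.2 + t * (q.2 - p.2) - p.2)²
        = t² * ((p.1 - q.1)² + (p.2 - q.2)²) by rewrite /Rsqr; ring.
have -> : (p.1 + t * (q.1 - p.1) - q.1)² + (p.2 + t * (q.2 - p.2) - q.2)²
        = (1 - t)² * ((p.1 - q.1)² + (p.2 - q.2)²) by rewrite /Rsqr; ring.
have d0 : 0 <= (p.1 - q.1)² + (p.2 - q.2)².
  by apply: Rplus_le_le_0_compat; apply: Rle_0_sqr.
rewrite !(sqrt_mult_alt (_²)) ?sqrt_Rsqr; try (exact: Rle_0_sqr || lra).
Qed.

Lemma segments_intersect_point p q r s :
  segments_intersect p q r s -> exists I,
    edist I p + edist I q = edist p q /\ edist I r + edist I s = edist r s.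
Proof.
case=> t [u [t0 [t1 [u0 [u1 [ex ey]]]]]].
exists (seg_point p q t); split; first by apply: edist_seg_point; lra.
have -> : seg_point p q t = seg_point r s u by rewrite /seg_point ex ey.
by apply: edist_seg_point; lra.
Qed.

Lemma Rplus_assoc_law : associative Rplus.
Proof. by move=> x y z; ring. Qed.

HB.instance Definition _ :=
  Monoid.isComLaw.Build R 0 Rplus Rplus_assoc_law Rplus_comm Rplus_0_l.

Lemma Rsum_map (T : Type) (f : T -> R) (l : seq T) :
  Rsum [seq f x | x <- l] = \big[Rplus/0]_(x <- l) f x.
Proof. by elim: l => [|x l IH] /=; rewrite ?big_nil ?big_cons ?IH. Qed.

Section FiniteSums.
Variables (I : finType) (g : I -> R).

Lemma big_pred2 (a b : I) : a != b ->
  \big[Rplus/0]_(v | (v == a) || (v == b)) g v = g a + g b.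
Proof.
move=> ab; rewrite (bigD1 a) ?eqxx //; congr Rplus.
apply: big_pred1 => v /=.
by case: (eqVneq v a) => [->|]; rewrite ?(negbTE ab) ?andbT.
Qed.

Hypothesis g_ge0 : forall v, 0 <= g v.

Lemma big_subpred_le (Q Q' : pred I) : subpred Q Q' ->
  \big[Rplus/0]_(v | Q v) g v <= \big[Rplus/0]_(v | Q' v) g v.
Proof.
move=> QQ'; rewrite [X in _ <= X](bigID Q) /=.
have -> : \big[Rplus/0]_(v | Q' v && Q v) g v = \big[Rplus/0]_(v | Q v) g v.
  by apply: eq_bigl => v; case Qv: (Q v); rewrite ?andbT ?andbF ?QQ'.
have : 0 <= \big[Rplus/0]_(v | Q' v && ~~ Q v) g v.
  by apply: (big_ind (fun x => 0 <= x)) => // [|x y]; lra.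
lra.
Qed.

Lemma big_sub_pred2_le (Q : pred I) (a b : I) :
  (forall v, Q v -> (v == a) || (v == b)) ->
  \big[Rplus/0]_(v | Q v) g v <= g a + g b.
Proof.
move=> Qab; apply: Rle_trans (big_subpred_le Qab) _.
case: (eqVneq a b) => [<-|ab]; last by rewrite big_pred2 //; apply: Rle_refl.
rewrite (big_pred1 a) => [|v]; last by rewrite /= orbb.
by have := g_ge0 a; lra.
Qed.

End FiniteSums.

Lemma card_set3 (T : finType) (a b c : T) :
  #|[set a; b; c]| = 3%nat -> [/\ a != b, a != c & b != c].
Proof.
have -> : [set a; b; c] = a |: [set b; c] by apply/setP => x; rewrite !inE orbA.
rewrite cardsU1 cards2 in_set2 negb_or.
by case: (a == b); case: (a == c); case: (b == c).
Qed.

Section EdgeSums.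
Variables (V : finType) (T : rel V) (w : V -> V -> R) (O : pred V).
Hypotheses (T_sym : symmetric T) (w_sym : forall u v, w u v = w v u).

Lemma edge_sum_split :
  \big[Rplus/0]_(p | T p.1 p.2) w p.1 p.2 =
    \big[Rplus/0]_(p | [&& T p.1 p.2, O p.1 & O p.2]) w p.1 p.2
  + 2 * \big[Rplus/0]_(i | ~~ O i) \big[Rplus/0]_(j | T i j && O j) w i j
  + \big[Rplus/0]_(i | ~~ O i) \big[Rplus/0]_(j | T i j && ~~ O j) w i j.
Proof.
rewrite !pair_big_dep (bigID (fun p => O p.1)) /=.
rewrite [X in X + _](bigID (fun p => O p.2)) [X in _ + X](bigID (fun p => O p.2)) /=.
have -> : \big[Rplus/0]_(p | (T p.1 p.2 && O p.1) && O p.2) w p.1 p.2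
        = \big[Rplus/0]_(p | [&& T p.1 p.2, O p.1 & O p.2]) w p.1 p.2.
  by apply: eq_bigl => p; rewrite andbA.
have -> : \big[Rplus/0]_(p | (T p.1 p.2 && ~~ O p.1) && O p.2) w p.1 p.2
        = \big[Rplus/0]_(p | ~~ O p.1 && (T p.1 p.2 && O p.2)) w p.1 p.2.
  by apply: eq_bigl => p; rewrite andbA (andbC (T _ _)).
have -> : \big[Rplus/0]_(p | (T p.1 p.2 && ~~ O p.1) && ~~ O p.2) w p.1 p.2
        = \big[Rplus/0]_(p | ~~ O p.1 && (T p.1 p.2 && ~~ O p.2)) w p.1 p.2.
  by apply: eq_bigl => p; rewrite andbA (andbC (T _ _)).
have -> : \big[Rplus/0]_(p | (T p.1 p.2 && O p.1) && ~~ O p.2) w p.1 p.2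
        = \big[Rplus/0]_(p | ~~ O p.1 && (T p.1 p.2 && O p.2)) w p.1 p.2.
  rewrite (reindex_inj (h := fun p : V * V => (p.2, p.1))) /=; last first.
    by move=> [a b] [c d] [-> ->].
  apply: eq_big => [p|p _]; last exact: w_sym.
  by rewrite T_sym; case: (T _ _); case: (O _); case: (O _).
(* [lra] only treats the sums as atoms once they are named. *)
set X := \big[Rplus/0]_(p | _) _; set Y := \big[Rplus/0]_(p | _) _.
set Z := \big[Rplus/0]_(p | _) _; lra.
Qed.

End EdgeSums.

Section Swap.
Variables (N : nat) (T : topology N) (S S' X Y : vtx N).

Lemma upair_eqC (u v a b : vtx N) : upair_eq u v a b = upair_eq v u a b.
Proof. by rewrite /upair_eq orbC; congr orb; apply: andbC. Qed.

Lemma swap_topology_sym : symmetric T -> symmetric (swap_topology T S S' X Y).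
Proof. by move=> T_sym u v; rewrite /swap_topology !(upair_eqC u) T_sym. Qed.

Lemma swap_topology_off u v : u != S -> u != S' -> v != S -> v != S' ->
  swap_topology T S S' X Y u v = T u v.
Proof.
move=> uS uS' vS vS'; rewrite /swap_topology /upair_eq.
by rewrite (negbTE uS) (negbTE uS') (negbTE vS) (negbTE vS') !andbF.
Qed.

Lemma swap_topology_l v : S != S' -> S != X -> S != Y ->
  swap_topology T S S' X Y S v = (v != X) && ((v == Y) || T S v).
Proof.
move=> SS' SX SY; rewrite /swap_topology /upair_eq eqxx.
rewrite (negbTE SS') (negbTE SX) (negbTE SY) /= !orbF.
by case: (v == X); case: (v == Y).
Qed.

Lemma swap_topology_r v : S' != S -> S' != X -> S' != Y ->
  swap_topology T S S' X Y S' v = (v != Y) && ((v == X) || T S' v).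
Proof.
move=> S'S S'X S'Y; rewrite /swap_topology /upair_eq eqxx.
rewrite (negbTE S'S) (negbTE S'X) (negbTE S'Y) /= !orbF.
by case: (v == X); case: (v == Y).
Qed.

End Swap.

Definition off_pair (N : nat) (x y : 'I_(N - 2)) (v : vtx N) :=
  (v != inr x) && (v != inr y).

Lemma off_pairC N (x y : 'I_(N - 2)) v : off_pair x y v = off_pair y x v.
Proof. exact: andbC. Qed.

Lemma full_topology_nbrs N (T : topology N) (x y : 'I_(N - 2)) (a b : vtx N) :
  full_topology T -> (forall v, T (inr x) v = [|| v == a, v == b | v == inr y]) ->
  [/\ x != y, a != b, off_pair x y a & off_pair x y b].
Proof.
move=> [_ T_irr _ _ T_deg] Tx.
have [ab ay by'] : [/\ a != b, a != inr y & b != inr y].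
  apply: card_set3; rewrite -(T_deg x); congr (#|pred_of_set _|).
  by apply/setP => v; rewrite !inE Tx orbA.
have := T_irr (inr x); rewrite Tx => /norP [xa /norP [xb xy]].
by split; rewrite // /off_pair 1?eq_sym ?xa ?xb.
Qed.

Section LocalLength.
Variables (N : nat) (P : 'I_N -> pt) (s s' : 'I_(N - 2)).
Implicit Types (T : topology N) (Z : 'I_(N - 2) -> pt).

Local Notation off := (off_pair s s').

Definition edge_length Z (u v : vtx N) := edist (vpos P Z u) (vpos P Z v).

Definition far_length T Z :=
  \big[Rplus/0]_(p | [&& T p.1 p.2, off p.1 & off p.2]) edge_length Z p.1 p.2.

Definition star_length T Z (k : 'I_(N - 2)) :=
  \big[Rplus/0]_(v | T (inr k) v && off v) edge_length Z (inr k) v.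

Definition merge_at Z (I : pt) (k : 'I_(N - 2)) :=
  if (k == s) || (k == s') then I else Z k.

Lemma tree_length_big T Z :
  tree_length T P Z = \big[Rplus/0]_(p | T p.1 p.2) edge_length Z p.1 p.2 / 2.
Proof.
rewrite /tree_length Rsum_map big_enum; congr Rdiv.
by apply: eq_bigl => p; rewrite inE.
Qed.

Lemma big_not_off (g : vtx N -> R) : s != s' ->
  \big[Rplus/0]_(v | ~~ off v) g v = g (inr s) + g (inr s').
Proof.
move=> ss'; rewrite -big_pred2 //.
by apply: eq_bigl => v; rewrite /off_pair negb_and !negbK.
Qed.

Lemma tree_length_split T Z : symmetric T -> s != s' ->
  T (inr s) (inr s') -> ~~ T (inr s) (inr s) -> ~~ T (inr s') (inr s') ->
  tree_length T P Z = far_length T Z / 2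
    + (star_length T Z s + star_length T Z s') + edist (Z s) (Z s').
Proof.
move=> T_sym ss' Tss' Tss Ts's'.
have len_sym u v : edge_length Z u v = edge_length Z v u by apply: edist_sym.
rewrite tree_length_big (edge_sum_split off T_sym len_sym) !big_not_off //.
rewrite !(big_mkcondl _ _ _ (fun j => ~~ off j)) !big_not_off //=.
rewrite (negbTE Tss) (negbTE Ts's') (T_sym (inr s')) Tss' /edge_length /=.
rewrite (edist_sym (Z s')) /far_length /star_length.
set F := \big[Rplus/0]_(p | _) _; set Ss := \big[Rplus/0]_(v | _) _.
set Ss' := \big[Rplus/0]_(v | _) _; lra.
Qed.

Lemma vpos_merge_at Z I v : off v -> vpos P (merge_at Z I) v = vpos P Z v.
Proof.
case: v => [//|k] /andP [ks ks'].
by rewrite /= /merge_at (negbTE (ks : k != s)) (negbTE (ks' : k != s')).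
Qed.

Lemma far_length_congr T T' Z Z' :
  (forall u v, off u -> off v -> T' u v = T u v) ->
  (forall v, off v -> vpos P Z' v = vpos P Z v) ->
  far_length T' Z' = far_length T Z.
Proof.
move=> TT' ZZ'; apply: eq_big => [p|p /and3P [_ off1 off2]].
  by case: (boolP (off p.1)) => off1; case: (boolP (off p.2)) => off2;
    rewrite ?andbF ?andbT // TT'.
by rewrite /edge_length !ZZ'.
Qed.

Lemma tree_length_merge_at_le T Z I a b c d : symmetric T -> s != s' ->
  T (inr s) (inr s') -> ~~ T (inr s) (inr s) -> ~~ T (inr s') (inr s') ->
  (forall v, T (inr s) v -> off v -> (v == a) || (v == b)) ->
  (forall v, T (inr s') v -> off v -> (v == c) || (v == d)) ->
  off a -> off b -> off c -> off d ->
  tree_length T P (merge_at Z I) <= far_length T Z / 2 +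
    (edist I (vpos P Z a) + edist I (vpos P Z b)
     + edist I (vpos P Z c) + edist I (vpos P Z d)).
Proof.
move=> T_sym ss' Tss' Tss Ts's' nbr_s nbr_s' off_a off_b off_c off_d.
have merge_s : merge_at Z I s = I by rewrite /merge_at eqxx.
have merge_s' : merge_at Z I s' = I by rewrite /merge_at eqxx orbT.
rewrite tree_length_split // merge_s merge_s' edist_refl Rplus_0_r.
rewrite (@far_length_congr T T Z (merge_at Z I)) //; last exact: vpos_merge_at.
have star_le k x y : merge_at Z I k = I ->
    (forall v, T (inr k) v -> off v -> (v == x) || (v == y)) -> off x -> off y ->
    star_length T (merge_at Z I) k <= edist I (vpos P Z x) + edist I (vpos P Z y).
  move=> merge_k nbr_k off_x off_y.
  rewrite -(vpos_merge_at Z I off_x) -(vpos_merge_at Z I off_y).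
  rewrite /star_length /edge_length /= merge_k.
  apply: big_sub_pred2_le => [v|v /andP []]; [exact: edist_ge0 | exact: nbr_k].
have := star_le s a b merge_s nbr_s off_a off_b.
have := star_le s' c d merge_s' nbr_s' off_c off_d.
lra.
Qed.

Lemma star_length_pred2 T Z k x y : x != y -> off x -> off y ->
  (forall v, off v -> T (inr k) v = (v == x) || (v == y)) ->
  star_length T Z k = edist (vpos P Z x) (Z k) + edist (vpos P Z y) (Z k).
Proof.
move=> xy off_x off_y Tk; rewrite /star_length /edge_length.
rewrite -!(edist_sym (Z k)) -(big_pred2 (fun v => edist (Z k) (vpos P Z v)) xy).
apply: eq_bigl => v; case: (boolP (off v)) => [/Tk ->|off_v]; first by rewrite andbT.
by rewrite andbF; apply/esym/norP; split; apply: contraNneq off_v => ->.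
Qed.

Section Junction.
Variables (T : topology N) (a b c d : vtx N).
Hypotheses (T_sym : symmetric T) (ss' : s != s')
  (Ts : forall v, T (inr s) v = [|| v == a, v == b | v == inr s'])
  (Ts' : forall v, T (inr s') v = [|| v == c, v == d | v == inr s])
  (off_a : off a) (off_b : off b) (off_c : off c) (off_d : off d).

Let ne_inr : (inr s : vtx N) != inr s'. Proof. exact: ss'. Qed.
Let Tss' : T (inr s) (inr s'). Proof. by rewrite Ts eqxx !orbT. Qed.

Let off_ne v : off v -> (inr s != v) && (inr s' != v).
Proof. by rewrite /off_pair !(eq_sym v). Qed.

Let T_irr_s : ~~ T (inr s) (inr s).
Proof.
have /andP [s_a _] := off_ne off_a; have /andP [s_b _] := off_ne off_b.
by rewrite Ts (negbTE s_a) (negbTE s_b) (negbTE ne_inr).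
Qed.

Let T_irr_s' : ~~ T (inr s') (inr s').
Proof.
have /andP [_ s'_c] := off_ne off_c; have /andP [_ s'_d] := off_ne off_d.
by rewrite Ts' (negbTE s'_c) (negbTE s'_d) eq_sym (negbTE ne_inr).
Qed.

Lemma tree_length_junction Z : a != b -> c != d ->
  tree_length T P Z = far_length T Z / 2 +
    (edist (vpos P Z a) (Z s) + edist (vpos P Z b) (Z s)
     + edist (vpos P Z c) (Z s') + edist (vpos P Z d) (Z s'))
    + edist (Z s) (Z s').
Proof.
move=> ab cd; rewrite tree_length_split // (@star_length_pred2 T Z s a b ab) //.
  rewrite (@star_length_pred2 T Z s' c d cd) //; first lra.
  by move=> v /andP [vs _]; rewrite Ts' (negbTE vs) orbF.
by move=> v /andP [_ vs']; rewrite Ts (negbTE vs') orbF.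
Qed.

Lemma tree_length_merge_junction_le Z I :
  tree_length T P (merge_at Z I) <= far_length T Z / 2 +
    (edist I (vpos P Z a) + edist I (vpos P Z b)
     + edist I (vpos P Z c) + edist I (vpos P Z d)).
Proof.
apply: tree_length_merge_at_le => // v.
  by rewrite Ts => + /andP [_ vs']; rewrite (negbTE vs') orbF.
by rewrite Ts' => + /andP [vs _]; rewrite (negbTE vs) orbF.
Qed.

Lemma tree_length_swap_merge_junction_le Z I :
  tree_length (swap_topology T (inr s) (inr s') a c) P (merge_at Z I) <=
    far_length T Z / 2 + (edist I (vpos P Z b) + edist I (vpos P Z c)
                          + edist I (vpos P Z a) + edist I (vpos P Z d)).
Proof.
have /andP [s_a s'_a] := off_ne off_a; have /andP [s_c s'_c] := off_ne off_c.
have s'_s : (inr s' : vtx N) != inr s by rewrite eq_sym.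
set T' := swap_topology T _ _ _ _.
have T'_s v : T' (inr s) v = (v != a) && ((v == c) || T (inr s) v).
  exact: swap_topology_l.
have T'_s' v : T' (inr s') v = (v != c) && ((v == a) || T (inr s') v).
  exact: swap_topology_r.
rewrite -(@far_length_congr T T' Z Z) // => [|u v /andP [us us'] /andP [vs vs']];
  last exact: swap_topology_off.
apply: tree_length_merge_at_le => //.
- exact: swap_topology_sym.
- by rewrite T'_s s'_a Tss' orbT.
- by rewrite T'_s (negbTE s_c) (negbTE T_irr_s) andbF.
- by rewrite T'_s' (negbTE s'_a) (negbTE T_irr_s') andbF.
- move=> v; rewrite T'_s Ts => /andP [va] + /andP [_ vs'].
  by rewrite (negbTE va) (negbTE vs') /= orbF orbC.
- move=> v; rewrite T'_s' Ts' => /andP [vc] + /andP [vs _].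
  by rewrite (negbTE vc) (negbTE vs) /= orbF.
Qed.

End Junction.

End LocalLength.

Theorem mainTheorem1 (N : nat) (P : 'I_N -> pt) (T0 : topology N)
    (s s' : 'I_(N - 2)) (A B C D : vtx N) (X0 : 'I_(N - 2) -> pt) :
  full_topology T0 ->
  (forall v, T0 (inr s) v = [|| v == A, v == B | v == inr s']) ->
  (forall v, T0 (inr s') v = [|| v == C, v == D | v == inr s]) ->
  minimal_tree T0 P X0 ->
  segments_intersect (vpos P X0 A) (vpos P X0 B) (vpos P X0 C) (vpos P X0 D) ->
  let T1 := swap_topology T0 (inr s) (inr s') A C in
  let T2 := swap_topology T0 (inr s) (inr s') B C in
  [/\ X0 s = X0 s',
      (exists X1, Rle (tree_length T1 P X1) (tree_length T0 P X0)),
      (exists X2, Rle (tree_length T2 P X2) (tree_length T0 P X0))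
    & Rplus (Rplus (Rplus (Rplus (edist (vpos P X0 A) (X0 s)) (edist (vpos P X0 B) (X0 s)))
                          (edist (vpos P X0 C) (X0 s'))) (edist (vpos P X0 D) (X0 s')))
            (edist (X0 s) (X0 s'))
      = Rplus (edist (vpos P X0 A) (vpos P X0 B)) (edist (vpos P X0 C) (vpos P X0 D))].
Proof.
move=> T0_full hs hs' X0_min /segments_intersect_point [I [I_AB I_CD]] T1 T2.
have T0_sym : symmetric T0 by case: T0_full.
have [ss' AB off_A off_B] := full_topology_nbrs T0_full hs.
have [_ CD] := full_topology_nbrs T0_full hs'; rewrite !(off_pairC s') => off_C off_D.
have hs_BA v : T0 (inr s) v = [|| v == B, v == A | v == inr s'] by rewrite hs orbCA.
have L0 := tree_length_junction P T0_sym ss' hs hs' off_A off_B off_C off_D X0 AB CD.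
have LY :=
  tree_length_merge_junction_le P T0_sym ss' hs hs' off_A off_B off_C off_D X0 I.
have L1 :=
  tree_length_swap_merge_junction_le P T0_sym ss' hs hs' off_A off_B off_C off_D X0 I.
have L2 := tree_length_swap_merge_junction_le
  P T0_sym ss' hs_BA hs' off_B off_A off_C off_D X0 I.
have X0_le_Y := X0_min (merge_at s s' X0 I).
have tri_AB := edist_triangle (vpos P X0 A) (vpos P X0 B) (X0 s).
have tri_CD := edist_triangle (vpos P X0 C) (vpos P X0 D) (X0 s').
rewrite (edist_sym (X0 s)) in tri_AB; rewrite (edist_sym (X0 s')) in tri_CD.
have ss'_ge0 := edist_ge0 (X0 s) (X0 s').
have ss'_eq0 : edist (X0 s) (X0 s') = 0 by lra.
split; [exact: edist_eq0 | exists (merge_at s s' X0 I); rewrite /T1; lra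
        | exists (merge_at s s' X0 I); rewrite /T2; lra | lra].
Qed.
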